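(* Let $S\in\mathcal S(n)$, let $k\le n$, let $L\ge n$ with $\tau=L/\sqrt{nk}$ and suppose $M=2L/\tau+k$ is an integer. Let $P_0$ be a $\tau$-post and suppose the $k\times M$ $\tau$-fence-tree with root $P_0$ exists in $S$, with nodes $P_i^m=(X_i^m,Y_i^m)$, and put $\Delta x=X_k^M-X_1^1$. Then (a) the path in the tree from the root $P_1^1$ to $P_k^M$ (the concatenation of the tree edges along it) has length at most $4L+3\tau\Delta x$; and (b) the total length of all edges of the tree is at most $k(3L+3\tau\Delta x)$.
   Context: Setting: $\mathcal S(n)$ is the class of scenes in the plane consisting of finitely many non-overlapping axis-parallel rectangular obstacles of width and height at least $1$, with integral corner $x$-coordinates, start $s=(0,0)$ and target the vertical line (''wall'') $x=n$. Up/down/right mean the $+y$/$-y$/$+x$ directions. A $\tau$-post is a vertical segment of height $2\tau$ contained in the left edge of an obstacle; it is identified with its center point. A $\tau$-path from a point $(x,y_0)$ is the path obtained by moving right along the line $y=y_0$: when an obstacle is hit whose nearest corner is at distance less than $\tau$, the path goes around that corner to the point on the opposite (right) side of the obstacle with $y$-coordinate $y_0$ and continues right; when an obstacle is hit whose nearest corner is at distance at least $\tau$, the path stops, and the $\tau$-post centered at the hit point is the end of the path; if the wall is reached the path stops there. For a $\tau$-post $P$, its up-child (resp. down-child) is the $\tau$-post at the end of the $\tau$-path starting from the top (resp. bottom) endpoint of $P$ (undefined if that $\tau$-path reaches the wall); the up-edge (resp. down-edge) from $P$ to that child is the vertical segment of length $\tau$ from the center of $P$ to its top (resp. bottom) endpoint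 followed by that $\tau$-path. The $k\times M$ $\tau$-fence-tree with root $P_0$ is the binary tree with nodes $P_i^m$, $1\le i\le k$, $1\le m\le M$, defined by: $P_1^1=P_0$; $P_1^m$ is the up-child of $P_1^{m-1}$ for $m\ge2$; $P_i^1$ is the down-child of $P_{i-1}^1$ for $i\ge2$; and for $i,m\ge2$, $P_i^m$ is the down-child of $P_{i-1}^m$ if $X_{i-1}^m> X_i^{m-1}$, and the up-child of $P_i^{m-1}$ otherwise. Its edges are the corresponding up- and down-edges from each node to its children. The tree is said to exist in $S$ if all these children are defined (no $\tau$-path used reaches the wall). *)

From Stdlib Require Import Reals Lra List ZArith.
Import ListNotations.
Open Scope R_scope.

Record rect := Rect { rx1 : R; rx2 : R; ry1 : R; ry2 : R }.

Definition scene := list rect.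

Definition non_overlapping (o o' : rect) : Prop :=
  rx2 o <= rx1 o' \/ rx2 o' <= rx1 o \/ ry2 o <= ry1 o' \/ ry2 o' <= ry1 o.

Definition good_rect (o : rect) : Prop :=
  rx2 o - rx1 o >= 1 /\ ry2 o - ry1 o >= 1 /\
  (exists z : Z, rx1 o = IZR z) /\ (exists z : Z, rx2 o = IZR z).

(* The class S(n) (start s = (0,0), target the wall x = n). *)
Definition in_S (n : nat) (sc : scene) : Prop :=
  Forall good_rect sc /\ ForallOrdPairs non_overlapping sc.

(* Moving right along y = y0 from abscissa x, obstacle o is the first one hit. *)
Definition first_hit (sc : scene) (x y0 : R) (o : rect) : Prop :=
  In o sc /\ x <= rx1 o /\ ry1 o < y0 < ry2 o /\
  forall o', In o' sc -> x <= rx1 o' -> ry1 o' < y0 < ry2 o' -> rx1 o <= rx1 o'.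

Definition corner_dist (o : rect) (y0 : R) : R := Rmin (y0 - ry1 o) (ry2 o - y0).

(* tau_path sc n tau x y0 q len : the tau-path from (x,y0) ends (without reaching
   the wall x = n) at the tau-post with center q, and has length len. *)
Inductive tau_path (sc : scene) (n : nat) (tau : R) : R -> R -> R * R -> R -> Prop :=
| tp_stop : forall x y0 o,
    first_hit sc x y0 o -> rx1 o < INR n -> corner_dist o y0 >= tau ->
    tau_path sc n tau x y0 (rx1 o, y0) (rx1 o - x)
| tp_around : forall x y0 o q len,
    first_hit sc x y0 o -> rx1 o < INR n -> corner_dist o y0 < tau ->
    rx2 o < INR n ->
    tau_path sc n tau (rx2 o) y0 q len ->
    tau_path sc n tau x y0 q
      ((rx1 o - x) + 2 * corner_dist o y0 + (rx2 o - rx1 o) + len).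

(* A tau-post (identified with its center p): a vertical segment of height 2 tau
   contained in the left edge of an obstacle. *)
Definition tau_post (sc : scene) (tau : R) (p : R * R) : Prop :=
  exists o, In o sc /\ fst p = rx1 o /\ ry1 o <= snd p - tau /\ snd p + tau <= ry2 o.

Definition up_edge (sc : scene) (n : nat) (tau : R) (p c : R * R) (len : R) : Prop :=
  exists l, tau_path sc n tau (fst p) (snd p + tau) c l /\ len = tau + l.

Definition down_edge (sc : scene) (n : nat) (tau : R) (p c : R * R) (len : R) : Prop :=
  exists l, tau_path sc n tau (fst p) (snd p - tau) c l /\ len = tau + l.

(* P i m = center of node P_i^m ; E i m = length of the tree edge entering P_i^m
   (for (i,m) <> (1,1)).  fence_tree ... holds iff these are the nodes and edge
   lengths of the k x M tau-fence-tree with root P 1 1, which exists in sc. *)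
Definition fence_tree (sc : scene) (n : nat) (tau : R) (k M : nat)
    (P : nat -> nat -> R * R) (E : nat -> nat -> R) : Prop :=
  tau_post sc tau (P 1%nat 1%nat) /\
  (forall m, (2 <= m <= M)%nat -> up_edge sc n tau (P 1%nat (m-1)%nat) (P 1%nat m) (E 1%nat m)) /\
  (forall i, (2 <= i <= k)%nat -> down_edge sc n tau (P (i-1)%nat 1%nat) (P i 1%nat) (E i 1%nat)) /\
  (forall i m, (2 <= i <= k)%nat -> (2 <= m <= M)%nat ->
     if Rlt_dec (fst (P i (m-1)%nat)) (fst (P (i-1)%nat m))
     then down_edge sc n tau (P (i-1)%nat m) (P i m) (E i m)
     else up_edge sc n tau (P i (m-1)%nat) (P i m) (E i m)).

Definition parent (P : nat -> nat -> R * R) (i m : nat) : nat * nat :=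
  if Nat.eqb i 1 then (1%nat, (m-1)%nat)
  else if Nat.eqb m 1 then ((i-1)%nat, 1%nat)
  else if Rlt_dec (fst (P i (m-1)%nat)) (fst (P (i-1)%nat m)) then ((i-1)%nat, m)
  else (i, (m-1)%nat).

(* length of the tree path from the root (1,1) to node (i,m); fuel >= i+m-2 suffices *)
Fixpoint root_path_len (fuel : nat) (P : nat -> nat -> R * R) (E : nat -> nat -> R)
    (i m : nat) : R :=
  match fuel with
  | O => 0
  | S f =>
      if andb (Nat.eqb i 1) (Nat.eqb m 1) then 0
      else E i m + root_path_len f P E (fst (parent P i m)) (snd (parent P i m))
  end.

Definition sumR (l : list R) : R := fold_right Rplus 0 l.

Definition total_len (k M : nat) (E : nat -> nat -> R) : R :=
  sumR (map (fun i => sumR (map (fun m =>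
           if andb (Nat.eqb i 1) (Nat.eqb m 1) then 0 else E i m) (seq 1 M)))
       (seq 1 k)).

(* Every tau-path of length l that advances by dx satisfies l <= 3 tau dx: going around an
   obstacle of width w >= 1 costs less than 2 tau + w <= 3 tau w, and since tau >= 1 the
   straight pieces cost at most tau times their horizontal extent.  Hence every tree edge
   costs at most tau + 3 tau (its horizontal advance).  Along the root path to P_k^M the
   horizontal advances telescope to Delta x and there are k + M - 2 edges; along a row
   i of the tree they telescope to X_i^M - X_1^1 <= Delta x, because abscissae increase
   down the columns and along the rows.  The parameters satisfy tau >= 1, k tau <= L and
   M tau = 2 L + k tau, which turn these counts into the bounds 4L and 3L. *)
From Stdlib Require Import Reals List Lra Lia Psatz.
Open Scope R_scope.

Lemma fence_parameters (n k L tau : R) :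
  1 <= k <= n -> n <= L -> tau = L / sqrt (n * k) -> 1 <= tau /\ k * tau <= L.
Proof.
  intros Hk HL ->.
  set (s := sqrt (n * k)).
  assert (Hs0 : 0 < s) by (apply sqrt_lt_R0; nra).
  assert (Hsn : s <= n).
  { apply Rle_trans with (sqrt (n * n)); [apply sqrt_le_1; nra | rewrite sqrt_square; lra]. }
  assert (Hks : k <= s).
  { apply Rle_trans with (sqrt (k * k)); [rewrite sqrt_square; lra | apply sqrt_le_1; nra]. }
  assert (Htau : L / s * s = L) by (field; lra).
  split; nra.
Qed.

Lemma tau_path_short sc n tau x y0 q len :
  Forall good_rect sc -> 1 <= tau -> tau_path sc n tau x y0 q len ->
  x <= fst q /\ len <= 3 * tau * (fst q - x).
Proof.
  intros Hgood Htau Hpath.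
  induction Hpath as [x y0 o Hhit _ _ | x y0 o q len Hhit _ Hcorner _ _ IH];
    destruct Hhit as [Hin [Hx _]]; simpl.
  - split; nra.
  - destruct IH as [Hq Hlen].
    rewrite Forall_forall in Hgood; destruct (Hgood o Hin) as [Hwidth _].
    split; nra.
Qed.

Definition short_edge (tau : R) (p c : R * R) (len : R) : Prop :=
  fst p <= fst c /\ len <= tau + 3 * tau * (fst c - fst p).

Lemma up_edge_short sc n tau p c len :
  Forall good_rect sc -> 1 <= tau -> up_edge sc n tau p c len -> short_edge tau p c len.
Proof.
  intros Hgood Htau [l [Hl ->]].
  destruct (tau_path_short _ _ _ _ _ _ _ Hgood Htau Hl); split; lra.
Qed.

Lemma down_edge_short sc n tau p c len :
  Forall good_rect sc -> 1 <= tau -> down_edge sc n tau p c len -> short_edge tau p c len.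
Proof.
  intros Hgood Htau [l [Hl ->]].
  destruct (tau_path_short _ _ _ _ _ _ _ Hgood Htau Hl); split; lra.
Qed.

Lemma sumR_app (l1 l2 : list R) : sumR (l1 ++ l2) = sumR l1 + sumR l2.
Proof. induction l1 as [|a l1 IH]; simpl; lra. Qed.

Lemma sumR_map_le {A} (f : A -> R) (c : R) (l : list A) :
  (forall x, In x l -> f x <= c) -> sumR (map f l) <= INR (length l) * c.
Proof.
  induction l as [|a l IH]; intros Hf; [simpl; lra|].
  assert (f a <= c) by (apply Hf; left; reflexivity).
  assert (sumR (map f l) <= INR (length l) * c) by (apply IH; intros; apply Hf; right; assumption).
  change (f a + sumR (map f l) <= INR (S (length l)) * c); rewrite S_INR; lra.
Qed.

Section FenceTree.

Variables (sc : scene) (n : nat) (tau : R) (k M : nat).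
Variables (P : nat -> nat -> R * R) (E : nat -> nat -> R).
Hypothesis Hgood : Forall good_rect sc.
Hypothesis Htau : 1 <= tau.
Hypothesis Htree : fence_tree sc n tau k M P E.

Local Notation X i m := (fst (P i m)).

Lemma first_row_short m :
  (1 <= m < M)%nat -> short_edge tau (P 1%nat m) (P 1%nat (S m)) (E 1%nat (S m)).
Proof.
  intros Hm; destruct Htree as [_ [Hrow _]].
  pose proof (Hrow (S m) ltac:(lia)) as Hup; rewrite Nat.sub_succ, Nat.sub_0_r in Hup.
  exact (up_edge_short _ _ _ _ _ _ Hgood Htau Hup).
Qed.

Lemma first_column_short i :
  (1 <= i < k)%nat -> short_edge tau (P i 1%nat) (P (S i) 1%nat) (E (S i) 1%nat).
Proof.
  intros Hi; destruct Htree as [_ [_ [Hcol _]]].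
  pose proof (Hcol (S i) ltac:(lia)) as Hdown; rewrite Nat.sub_succ, Nat.sub_0_r in Hdown.
  exact (down_edge_short _ _ _ _ _ _ Hgood Htau Hdown).
Qed.

Lemma inner_short i m :
  (1 <= i < k)%nat -> (1 <= m < M)%nat ->
  if Rlt_dec (X (S i) m) (X i (S m))
  then short_edge tau (P i (S m)) (P (S i) (S m)) (E (S i) (S m))
  else short_edge tau (P (S i) m) (P (S i) (S m)) (E (S i) (S m)).
Proof.
  intros Hi Hm; destruct Htree as [_ [_ [_ Hinner]]].
  pose proof (Hinner (S i) (S m) ltac:(lia) ltac:(lia)) as Hedge.
  rewrite !Nat.sub_succ, !Nat.sub_0_r in Hedge.
  destruct (Rlt_dec _ _).
  - exact (down_edge_short _ _ _ _ _ _ Hgood Htau Hedge).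
  - exact (up_edge_short _ _ _ _ _ _ Hgood Htau Hedge).
Qed.

Lemma X_le_down i m : (1 <= i < k)%nat -> (1 <= m <= M)%nat -> X i m <= X (S i) m.
Proof.
  intros Hi Hm; destruct m as [|[|m]]; [lia | apply first_column_short; lia |].
  pose proof (inner_short i (S m) Hi ltac:(lia)) as Hedge.
  destruct (Rlt_dec _ _); destruct Hedge; lra.
Qed.

Lemma X_le_down_iter d i m :
  (1 <= i)%nat -> (i + d <= k)%nat -> (1 <= m <= M)%nat -> X i m <= X (i + d) m.
Proof.
  intros Hi Hd Hm; induction d as [|d IH]; rewrite ?Nat.add_0_r; [lra|].
  rewrite Nat.add_succ_r.
  pose proof (X_le_down (i + d) m ltac:(lia) Hm); specialize (IH ltac:(lia)); lra.
Qed.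

Lemma E_le_right i m :
  (1 <= i <= k)%nat -> (1 <= m < M)%nat -> E i (S m) <= tau + 3 * tau * (X i (S m) - X i m).
Proof.
  intros Hi Hm; destruct i as [|[|i]]; [lia | apply first_row_short; lia |].
  pose proof (inner_short (S i) m ltac:(lia) Hm) as Hedge.
  (* a down-edge into P_i^(m+1) starts further right than P_i^m *)
  destruct (Rlt_dec _ _); destruct Hedge; nra.
Qed.

Lemma parent_edge_short i m :
  (1 <= i <= k)%nat -> (1 <= m <= M)%nat -> (2 < i + m)%nat ->
  (1 <= fst (parent P i m) <= k)%nat /\ (1 <= snd (parent P i m) <= M)%nat /\
  (fst (parent P i m) + snd (parent P i m) = i + m - 1)%nat /\
  short_edge tau (P (fst (parent P i m)) (snd (parent P i m))) (P i m) (E i m).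
Proof.
  intros Hi Hm Him; unfold parent.
  destruct i as [|[|i]]; [lia | |]; destruct m as [|[|m]]; try lia; cbn.
  - repeat split; try lia; apply first_row_short; lia.
  - repeat split; try lia; apply first_column_short; lia.
  - pose proof (inner_short (S i) (S m) ltac:(lia) ltac:(lia)) as Hedge.
    destruct (Rlt_dec _ _); cbn; repeat split; try lia; apply Hedge.
Qed.

Lemma root_path_len_le fuel i m :
  (1 <= i <= k)%nat -> (1 <= m <= M)%nat -> (i + m <= fuel + 2)%nat ->
  root_path_len fuel P E i m <= tau * (INR i + INR m - 2) + 3 * tau * (X i m - X 1%nat 1%nat).
Proof.
  revert i m; induction fuel as [|fuel IH]; intros i m Hi Hm Hfuel.
  - replace i with 1%nat by lia; replace m with 1%nat by lia; simpl; lra.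
  - cbn [root_path_len].
    destruct (andb (Nat.eqb i 1) (Nat.eqb m 1)) eqn:Hroot.
    + apply andb_prop in Hroot as [Hi1 Hm1].
      apply Nat.eqb_eq in Hi1, Hm1; subst; simpl; lra.
    + assert (Him : (2 < i + m)%nat).
      { apply Bool.andb_false_iff in Hroot as [H1 | H1]; apply Nat.eqb_neq in H1; lia. }
      destruct (parent_edge_short i m Hi Hm Him) as (Hi' & Hm' & Hsum & Hle & Hlen).
      destruct (parent P i m) as [i' m']; cbn in *.
      pose proof (IH i' m' Hi' Hm' ltac:(lia)) as Hpath.
      assert (Hcount : INR i' + INR m' + 1 = INR i + INR m).
      { rewrite <- !plus_INR, <- S_INR; f_equal; lia. }
      nra.
Qed.

Definition tree_edge_len (i m : nat) : R :=
  if andb (Nat.eqb i 1) (Nat.eqb m 1) then 0 else E i m.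

Lemma row_sum_le i j :
  (1 <= i <= k)%nat -> (1 <= j <= M)%nat ->
  sumR (map (tree_edge_len i) (seq 1 j)) <= INR j * tau + 3 * tau * (X i j - X 1%nat 1%nat).
Proof.
  intros Hi; induction j as [|[|j] IH]; intros Hj; [lia| |].
  - unfold tree_edge_len; simpl.
    destruct i as [|[|i]]; [lia | simpl; lra |]; simpl.
    destruct (first_column_short (S i) ltac:(lia)) as [_ Hedge].
    pose proof (X_le_down_iter i 1 1 ltac:(lia) ltac:(lia) ltac:(lia)); simpl in *; nra.
  - rewrite seq_S, map_app, sumR_app; cbn [map sumR fold_right].
    replace (tree_edge_len i (1 + S j)) with (E i (S (S j)))
      by (unfold tree_edge_len; destruct (Nat.eqb i 1); reflexivity).
    pose proof (IH ltac:(lia)); pose proof (E_le_right i (S j) Hi ltac:(lia)).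
    rewrite (S_INR (S j)); lra.
Qed.

Lemma total_len_le :
  (1 <= M)%nat ->
  total_len k M E <= INR k * (INR M * tau + 3 * tau * (X k M - X 1%nat 1%nat)).
Proof.
  intros HM.
  change (total_len k M E) with (sumR (map (fun i => sumR (map (tree_edge_len i) (seq 1 M))) (seq 1 k))).
  rewrite <- (length_seq k 1) at 2; apply sumR_map_le.
  intros i Hin; apply in_seq in Hin.
  pose proof (row_sum_le i M ltac:(lia) ltac:(lia)).
  pose proof (X_le_down_iter (k - i) i M ltac:(lia) ltac:(lia) ltac:(lia)) as Hcol.
  replace (i + (k - i))%nat with k in Hcol by lia.
  nra.
Qed.

End FenceTree.

Theorem theorem2 (n : nat) (sc : scene) (k : nat) (L tau : R) (M : nat)
    (P : nat -> nat -> R * R) (E : nat -> nat -> R) :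
  in_S n sc ->
  (1 <= k)%nat -> (k <= n)%nat ->
  L >= INR n ->
  tau = L / sqrt (INR n * INR k) ->
  INR M = 2 * L / tau + INR k ->
  fence_tree sc n tau k M P E ->
  let dx := fst (P k M) - fst (P 1%nat 1%nat) in
  root_path_len (k + M) P E k M <= 4 * L + 3 * tau * dx /\
  total_len k M E <= INR k * (3 * L + 3 * tau * dx).
Proof.
  intros [Hgood _] Hk Hkn HL Htau_def HM Htree dx.
  assert (Hk_real : 1 <= INR k <= INR n) by (split; [apply (le_INR 1) | apply le_INR]; lia).
  destruct (fence_parameters (INR n) (INR k) L tau Hk_real ltac:(lra) Htau_def) as [Htau HkL].
  assert (HMtau : INR M * tau = 2 * L + INR k * tau) by (rewrite HM; field; lra).
  assert (HM1 : (1 <= M)%nat) by (apply INR_le; simpl; nra).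
  split.
  - pose proof (root_path_len_le sc n tau k M P E Hgood Htau Htree (k + M) k M
      ltac:(lia) ltac:(lia) ltac:(lia)).
    unfold dx; nra.
  - pose proof (total_len_le sc n tau k M P E Hgood Htau Htree HM1) as Htotal.
    apply (Rle_trans _ _ _ Htotal), Rmult_le_compat_l; unfold dx; lra.
Qed.
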